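(* Let $F$ be a commutative field, $1\le h\le n-1$ with $n-h\equiv 1\pmod 2$, and let $K$ be a linear complex of $h$-subspaces in $\mathrm{PG}(n,F)$. Then every $(h-2)$-subspace of $\mathrm{PG}(n,F)$ is contained in a singular $(h-1)$-subspace of $K$.
   Context: A $d$-subspace is a projective subspace of dimension $d$ (the $(-1)$-subspace is the empty set). A linear complex of $h$-subspaces of $\mathrm{PG}(n,F)$ is the set of $h$-subspaces whose Plücker image ($F(v_0\wedge\cdots\wedge v_h)$ for a basis $v_0,\dots,v_h$) lies in a fixed hyperplane of $\mathbb P(\bigwedge^{h+1}F^{n+1})$. An $(h-1)$-subspace $U$ is singular for $K$ if every $h$-subspace containing $U$ belongs to $K$. *)

From HB Require Import structures.
From mathcomp Require Import all_boot all_order all_algebra.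
Set Implicit Arguments. Unset Strict Implicit. Unset Printing Implicit Defensive.
Import GRing.Theory.
Local Open Scope ring_scope.

(* Projective space PG(n,F) is modelled on V = F^(n+1) = 'rV[F]_(n.+1).
   A projective d-subspace is the row space of a matrix of rank d+1
   (we use square matrices 'M[F]_(n.+1) as representatives of subspaces;
   containment is (U <= W)%MS). *)

Definition plucker (F : fieldType) (n h : nat) (B : 'M[F]_(h.+1, n.+1))
  (S : {set 'I_n.+1}) : F :=
  \det (colsub (fun k : 'I_h.+1 => nth ord0 (enum S) k) B).

(* A hyperplane of P(/\^{h+1} F^{n+1}) is given by its coefficient vector
   c, with respect to the standard basis e_S (#|S| = h+1); it is nonzero. *)
Definition hyperplane_coeffs (F : fieldType) (n h : nat)
  (c : {set 'I_n.+1} -> F) : Prop :=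
  exists S : {set 'I_n.+1}, #|S| = h.+1 /\ c S != 0.

Definition plucker_pairing (F : fieldType) (n h : nat)
  (c : {set 'I_n.+1} -> F) (B : 'M[F]_(h.+1, n.+1)) : F :=
  \sum_(S : {set 'I_n.+1} | #|S| == h.+1) c S * plucker B S.

Definition in_complex (F : fieldType) (n h : nat) (c : {set 'I_n.+1} -> F)
  (W : 'M[F]_(n.+1)) : Prop :=
  exists B : 'M[F]_(h.+1, n.+1), (B == W)%MS /\ plucker_pairing c B = 0.

Definition singular_for (F : fieldType) (n h : nat) (c : {set 'I_n.+1} -> F)
  (U : 'M[F]_(n.+1)) : Prop :=
  forall W : 'M[F]_(n.+1), \rank W = h.+1 -> (U <= W)%MS -> in_complex h c W.

From mathcomp Require Import all_boot all_order all_algebra all_fingroup zify.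
Set Implicit Arguments. Unset Strict Implicit. Unset Printing Implicit Defensive.
Import GRing.Theory.
Local Open Scope ring_scope.

(* Applying the linear form c to the Plücker vector of
   <a, b, X> gives an alternating bilinear form on vectors a, b, vanishing
   whenever a lies in <b, X>.  On a complement of X, whose dimension
   n + 1 - (h - 1) is odd, its Gram matrix is skew-symmetric with zero diagonal,
   hence singular: in the Leibniz expansion the terms of s and s^-1 cancel, and
   every involutive permutation of an odd set has a fixed point.  A vector v of
   the kernel lies outside X and is orthogonal to every vector, so every
   h-subspace <X, v, w> through U = <X, v> belongs to the complex. *)

Lemma sum_involution_fixed (R : zmodType) (T : finType) (f : T -> T) (t : T -> R) :
  involutive f -> (forall x, f x != x -> t (f x) = - t x) ->
  \sum_x t x = \sum_(x | f x == x) t x.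
Proof.
move=> ff tf; rewrite (bigID (fun x => f x == x)) /= -[RHS]addr0; congr (_ + _).
(* Each pair {x, f x} is counted once, through its member of smaller rank:
   unlike halving, this also works in characteristic 2. *)
rewrite (bigID (fun x => enum_rank x < enum_rank (f x))%N) /=.
rewrite [X in _ + X](reindex_inj (inv_inj ff)) /=.
rewrite [X in _ + X](eq_big (fun x => (f x != x) && (enum_rank x < enum_rank (f x)))%N
    (fun x => - t x)) ?sumrN ?subrr // => x; rewrite ff; last first.
  by move=> /andP[fx _]; rewrite tf // eq_sym.
rewrite eq_sym; case: (eqVneq (f x) x) => //= fx.
have rx : (enum_rank x : nat) != enum_rank (f x).
  by rewrite val_eqE (inj_eq enum_rank_inj) eq_sym.
by rewrite -leqNgt leq_eqVlt (negbTE rx).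
Qed.

Lemma involutive_fixpoint (T : finType) (f : T -> T) :
  involutive f -> odd #|T| -> exists x, f x = x.
Proof.
move=> ff oddT; case: (pickP (fun x => f x == x)) => [x /eqP|nofix]; first by exists x.
have oneN : (1 : 'Z_2) = -1 by apply/eqP.
have := @sum_involution_fixed _ _ f (fun _ => 1) ff (fun _ _ => oneN).
rewrite [RHS]big_pred0 // sumr_const Zp_nat => /(congr1 val).
by rewrite /= modn2 oddT.
Qed.

Lemma det_skew_odd (R : comPzRingType) m (A : 'M[R]_m) :
  odd m -> (forall i, A i i = 0) -> A^T = - A -> \det A = 0.
Proof.
move=> oddm A0 skewA; have skewE i j : A j i = - A i j.
  by have := congr1 (fun B : 'M_m => B i j) skewA; rewrite !mxE.
rewrite /determinant (@sum_involution_fixed _ _ (fun s => s^-1)%g) => [|s|s _].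
- apply: big1 => s /eqP sV.
  have sK : involutive s by move=> i; rewrite -{1}sV permK.
  have [|i si] := involutive_fixpoint sK; first by rewrite card_ord.
  by rewrite (bigD1 i) //= si A0 mul0r mulr0.
- exact: invgK.
- rewrite odd_permV -mulrN; congr (_ * _).
  rewrite (reindex_inj (@perm_inj _ s)) /=.
  under eq_bigr => i _ do rewrite permK skewE.
  by rewrite prodrN card_ord -signr_odd oddm expr1 mulN1r.
Qed.

Lemma mxrank_colsub (F : fieldType) m p q (f : 'I_q -> 'I_p) (B : 'M[F]_(m, p)) :
  (\rank (colsub f B) <= \rank B)%N.
Proof.
rewrite -mxrank_tr -[\rank B]mxrank_tr.
have -> : (colsub f B)^T = rowsub f B^T by apply/matrixP => i j; rewrite !mxE.
exact/mxrankS/rowsub_sub.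
Qed.

Section PluckerPairing.
Variables (F : fieldType) (n h : nat) (c : {set 'I_n.+1} -> F).

Lemma plucker_pairing_multilinear (A B C : 'M[F]_(h.+1, n.+1)) i0 x :
    row i0 A = x *: row i0 B + row i0 C ->
    row' i0 B = row' i0 A -> row' i0 C = row' i0 A ->
  plucker_pairing c A = x * plucker_pairing c B + plucker_pairing c C.
Proof.
move=> rowA rowB rowC; rewrite /plucker_pairing mulr_sumr -big_split.
apply: eq_bigr => S _; rewrite /plucker.
set f := fun k : 'I_h.+1 => nth ord0 (enum S) k.
have row_colsub (D : 'M[F]_(h.+1, n.+1)) : row i0 (colsub f D) = colsub f (row i0 D).
  by apply/matrixP => i j; rewrite !mxE.
have row'_colsub (D : 'M[F]_(h.+1, n.+1)) : row' i0 (colsub f D) = colsub f (row' i0 D).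
  by apply/matrixP => i j; rewrite !mxE.
rewrite (@determinant_multilinear _ _ _ (colsub f B) (colsub f C) i0 x 1).
- by rewrite mul1r mulrDr mulrCA.
- by rewrite !row_colsub rowA linearD linearZ scale1r.
- by rewrite !row'_colsub rowB.
- by rewrite !row'_colsub rowC.
Qed.

Lemma plucker_pairing_rank_deficient (B : 'M[F]_(h.+1, n.+1)) :
  (\rank B < h.+1)%N -> plucker_pairing c B = 0.
Proof.
move=> rankB; apply: big1 => S _; rewrite /plucker.
set D := colsub _ B; suff : D \notin unitmx.
  by rewrite unitmxE unitfE negbK => /eqP ->; rewrite mulr0.
rewrite -row_free_unit /row_free neq_ltn.
by rewrite (leq_ltn_trans (mxrank_colsub _ _)).
Qed.

End PluckerPairing.

Lemma linear_rV_expand (R : pzRingType) N (g : 'rV[R]_N -> R) :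
    (forall x a1 a2, g (x *: a1 + a2) = x * g a1 + g a2) ->
  forall a, g a = \sum_j a 0 j * g (delta_mx 0 j).
Proof.
move=> gL a; have g0 : g 0 = 0.
  by apply: (@addrI _ (g 0)); rewrite addr0 -{1}(mul1r (g 0)) -gL scale1r addr0.
rewrite {1}[a]matrix_sum_delta big_ord1.
by apply: (big_rec2 (fun u y => g u = y)) => // j y u _ <-; rewrite gL.
Qed.

Lemma mxrank_adds_notin (F : fieldType) m p (A : 'M[F]_(m, p)) (v : 'rV_p) :
  ~~ (v <= A)%MS -> \rank (A + v)%MS = (\rank A).+1.
Proof.
move=> vA; apply/eqP; rewrite eqn_leq; apply/andP; split.
  by rewrite -[(\rank A).+1]addn1 (leq_trans (mxrank_adds_leqif A v).1) ?leq_add2l ?rank_leq_row.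
apply: rank_ltmx; rewrite ltmxE addsmxSl.
by apply: contra vA; apply: submx_trans (addsmxSr A v).
Qed.

Section PluckerForm.
Variables (F : fieldType) (n k : nat) (c : {set 'I_n.+1} -> F) (xs : 'M[F]_(k, n.+1)).

Definition plucker_form (a b : 'rV[F]_n.+1) := plucker_pairing c (col_mx (col_mx a b) xs).

Let ia : 'I_(1 + 1 + k) := lshift k (lshift 1 0).
Let ib : 'I_(1 + 1 + k) := lshift k (rshift 1 0).

Lemma row_stackl (a b : 'rV[F]_n.+1) : row ia (col_mx (col_mx a b) xs) = a.
Proof. by rewrite rowKu rowKu row_id. Qed.

Lemma row_stackr (a b : 'rV[F]_n.+1) : row ib (col_mx (col_mx a b) xs) = b.
Proof. by rewrite rowKu rowKd row_id. Qed.

Lemma row'_stackl (a a' b : 'rV[F]_n.+1) :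
  row' ia (col_mx (col_mx a b) xs) = row' ia (col_mx (col_mx a' b) xs).
Proof.
apply/matrixP => i j; rewrite !mxE.
case: (split_ordP (lift ia i)) => // i2 li; rewrite !mxE.
case: (split_ordP i2) => // i4 e.
by move: (neq_lift ia i); rewrite li e (ord1 i4) eqxx.
Qed.

Lemma row'_stackr (a b b' : 'rV[F]_n.+1) :
  row' ib (col_mx (col_mx a b) xs) = row' ib (col_mx (col_mx a b') xs).
Proof.
apply/matrixP => i j; rewrite !mxE.
case: (split_ordP (lift ib i)) => // i2 li; rewrite !mxE.
case: (split_ordP i2) => // i4 e.
by move: (neq_lift ib i); rewrite li e (ord1 i4) eqxx.
Qed.

Lemma plucker_formDl x a1 a2 b :
  plucker_form (x *: a1 + a2) b = x * plucker_form a1 b + plucker_form a2 b.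
Proof.
apply: (plucker_pairing_multilinear (i0 := ia) c); [|exact: row'_stackl..].
by rewrite !row_stackl.
Qed.

Lemma plucker_formDr x a b1 b2 :
  plucker_form a (x *: b1 + b2) = x * plucker_form a b1 + plucker_form a b2.
Proof.
apply: (plucker_pairing_multilinear (i0 := ib) c); [|exact: row'_stackr..].
by rewrite !row_stackr.
Qed.

Lemma plucker_form_degenerate a b : (a <= b + xs)%MS -> plucker_form a b = 0.
Proof.
move=> abxs; apply: plucker_pairing_rank_deficient.
have /mxrankS : (col_mx (col_mx a b) xs <= b + xs)%MS.
  by rewrite !col_mx_sub abxs addsmxSl addsmxSr.
move/leq_ltn_trans; apply; apply: leq_ltn_trans (mxrank_adds_leqif b xs).1 _.
by rewrite ltnS; exact: leq_add (rank_leq_row b) (rank_leq_row xs).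
Qed.

Lemma plucker_form_skew a b : plucker_form b a = - plucker_form a b.
Proof.
have alt u : plucker_form u u = 0 by apply/plucker_form_degenerate/addsmxSl.
have := alt (1 *: a + b).
rewrite plucker_formDl !plucker_formDr !mul1r !alt add0r addr0 addrC.
by move/eqP; rewrite addr_eq0 => /eqP.
Qed.

Definition plucker_gram : 'M[F]_n.+1 :=
  \matrix_(i, j) plucker_form (delta_mx 0 i) (delta_mx 0 j).

Lemma plucker_formE a b : plucker_form a b = (a *m plucker_gram *m b^T) 0 0.
Proof.
rewrite (linear_rV_expand (fun x a1 a2 => plucker_formDl x a1 a2 b)).
under eq_bigr => i _ do rewrite (linear_rV_expand (plucker_formDr^~ (delta_mx 0 i))).
rewrite mxE; under [RHS]eq_bigr => j _ do rewrite !mxE big_distrl.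
rewrite exchange_big /=; apply: eq_bigr => i _; rewrite big_distrr.
by apply: eq_bigr => j _; rewrite !mxE /= [b 0 j * _]mulrC mulrA.
Qed.

Lemma plucker_gram_mulE p q (A : 'M_(p, n.+1)) (B : 'M_(q, n.+1)) i j :
  (A *m plucker_gram *m B^T) i j = plucker_form (row i A) (row j B).
Proof.
rewrite plucker_formE !mxE; apply: eq_bigr => l _; rewrite !mxE; congr (_ * _).
by apply: eq_bigr => p' _; rewrite !mxE.
Qed.

Lemma plucker_gram_radical :
  row_free xs -> odd (n.+1 - k) ->
  exists2 v : 'rV[F]_n.+1, ~~ (v <= xs)%MS & v *m plucker_gram = 0.
Proof.
move=> xs_free odd_codim; set G := plucker_gram.
set C := row_base (xs^C)%MS; set Q := C *m G *m C^T.
have QE i j : Q i j = plucker_form (row i C) (row j C) by apply: plucker_gram_mulE.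
have /det0P[u u_neq0 uQ] : \det Q == 0.
  apply/eqP/det_skew_odd => [|i|]; first by rewrite mxrank_compl (eqP xs_free).
    by rewrite QE; apply/plucker_form_degenerate/addsmxSl.
  by apply/matrixP => i j; rewrite [Q^T _ _]mxE [(- Q) _ _]mxE !QE plucker_form_skew.
set v := u *m C; exists v.
  have vC : (v <= xs^C)%MS by rewrite -(eq_row_base (xs^C)%MS) submxMl.
  apply: contra u_neq0 => vxs; rewrite -(mulmx_free_eq0 _ (row_base_free _)).
  by rewrite -submx0 -(capmx_compl xs) sub_capmx vxs vC.
have vGC : v *m G *m C^T = 0 by rewrite -uQ /v /Q !mulmxA.
have vGxs : v *m G *m xs^T = 0.
  apply/matrixP => i j; rewrite (ord1 i) [RHS]mxE plucker_gram_mulE row_id.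
  rewrite plucker_form_skew plucker_form_degenerate ?oppr0 //.
  exact: submx_trans (row_sub _ _) (addsmxSr _ _).
have /submxP[D DE] : (1%:M <= col_mx xs C)%MS.
  by rewrite -addsmxE (adds_eqmx (eqmx_refl xs) (eq_row_base _)) sub1mx addsmx_compl_full.
rewrite -[v *m G]mulmx1 -trmx1 DE trmx_mul mulmxA tr_col_mx mul_mx_row vGC vGxs.
by rewrite row_mx0 mul0mx.
Qed.

Lemma plucker_radical_singular (v : 'rV[F]_n.+1) :
    row_free xs -> ~~ (v <= xs)%MS -> v *m plucker_gram = 0 ->
  singular_for k.+1 c (xs + v)%MS.
Proof.
move=> xs_free vxs vG W rankW UW; set U := (xs + v)%MS.
have rankU : \rank U = k.+1 by rewrite mxrank_adds_notin // (eqP xs_free).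
have /row_subPn[i wU] : ~~ (W <= U)%MS.
  by apply/negP => /mxrankS; rewrite rankW rankU ltnn.
set w := row i W; set B := col_mx (col_mx v w) xs.
have /and3P[vB wB xsB] : [&& v <= B, w <= B & xs <= B]%MS.
  by rewrite andbA -!col_mx_sub submx_refl.
have BW : (B <= W)%MS.
  by rewrite !col_mx_sub row_sub andbT !(submx_trans _ UW) ?addsmxSl ?addsmxSr.
have UwB : (U + w <= B)%MS by rewrite !addsmx_sub vB wB xsB.
exists B; split.
  rewrite -(mxrank_leqif_eq BW) rankW eqn_leq rank_leq_row.
  by rewrite -rankU -(mxrank_adds_notin wU) mxrankS.
by rewrite -[plucker_pairing _ _]/(plucker_form v w) plucker_formE vG !mul0mx mxE.
Qed.

End PluckerForm.

Theorem proposition6p2 (F : fieldType) (n h : nat) (c : {set 'I_n.+1} -> F) :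
  (1 <= h)%N -> (h <= n.-1)%N -> odd (n - h) ->
  hyperplane_coeffs h c ->
  forall X : 'M[F]_(n.+1), \rank X = h.-1 ->
  exists U : 'M[F]_(n.+1),
    [/\ \rank U = h, (X <= U)%MS & singular_for h c U].
Proof.
case: h => [//|k] _ le_k_n odd_codim _ X /= rankX; set xs := row_base X.
have xs_free : row_free xs := row_base_free X.
have odd_compl : odd (n.+1 - \rank X).
  by rewrite rankX (_ : n.+1 - k = (n - k.+1).+2)%N ?negbK //; lia.
have [v vxs vG] := plucker_gram_radical c xs_free odd_compl.
exists (xs + v)%MS; split.
- by rewrite mxrank_adds_notin // (eqP xs_free) rankX.
- by rewrite -(eq_row_base X) addsmxSl.
- by rewrite -rankX; apply: plucker_radical_singular.
Qed.
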